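(* Let $n \ge 2$ and $1 \le r < n$ be integers, let $S^0 \in \mathbb{R}^{n\times n}$ be a symmetric matrix, and define $f:\mathbb{R}^{n\times r}\to\mathbb{R}$ by $f(V) = \|VV^\top - S^0\|_F^2$. Suppose $\hat V \in \mathbb{R}^{n\times r}$ is a local minimizer of $f$ such that the matrix $\hat S = \hat V\hat V^\top$ satisfies $\operatorname{rank}(\hat S) < r$. Then $\hat V$ is a global minimizer of $f$ over $\mathbb{R}^{n\times r}$, and $\hat S$ is a global minimizer of the problem $\min_{S} \|S - S^0\|_F^2$ subject to $S \succeq 0$ (and hence also of this problem with the additional constraint $\operatorname{rank}(S)\le r$).
   Context: $\|\cdot\|_F$ denotes the Frobenius norm; $S\succeq 0$ means $S$ is symmetric positive semidefinite. *)

From mathcomp Require Import all_boot all_order all_algebra.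
From mathcomp Require Import reals.
Set Implicit Arguments. Unset Strict Implicit. Unset Printing Implicit Defensive.
Import Order.TTheory GRing.Theory Num.Theory.
Local Open Scope ring_scope.

Definition frob (R : realType) (m n : nat) (A : 'M[R]_(m, n)) : R :=
  Num.sqrt (\sum_(i < m) \sum_(j < n) A i j ^+ 2).

Definition fobj (R : realType) (n r : nat) (S0 : 'M[R]_n) (V : 'M[R]_(n, r)) : R :=
  frob (V *m V^T - S0) ^+ 2.

Definition psd (R : realType) (n : nat) (S : 'M[R]_n) : Prop :=
  S^T = S /\ forall x : 'cV[R]_n, 0 <= (x^T *m S *m x) 0 0.

Definition local_min (R : realType) (m n : nat) (g : 'M[R]_(m, n) -> R)
  (X : 'M[R]_(m, n)) : Prop :=
  exists eps : R, 0 < eps /\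
    forall Y : 'M[R]_(m, n), frob (Y - X) < eps -> g X <= g Y.

From mathcomp Require Import all_boot all_order all_algebra.
From mathcomp Require Import reals ring lra zify.
Set Implicit Arguments. Unset Strict Implicit. Unset Printing Implicit Defensive.
Import Order.TTheory GRing.Theory Num.Theory.
Local Open Scope ring_scope.

(* At a local minimizer V the residual E = V V^T - S0 satisfies the first-order
   condition E V = 0.  If rank (V V^T) < r, some u != 0 has V u = 0; moving V in the
   direction x u^T leaves V V^T unchanged to first order and changes f by
   2 t^2 |u|^2 x^T E x + O(t^4), so E is positive semidefinite.  Then V V^T is the
   Frobenius-nearest psd matrix to S0: for psd S,
   |S - S0|^2 = |S - V V^T|^2 + 2 <S, E> + |E|^2 with <S, E> >= 0 and
   <V V^T, E> = tr (V^T E V) = 0. *)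

Section FrobeniusInnerProduct.
Variable R : realType.

Definition dot (m n : nat) (A B : 'M[R]_(m, n)) : R := \tr (A^T *m B).

Lemma dot_sum m n (A B : 'M[R]_(m, n)) :
  dot A B = \sum_(i < m) \sum_(j < n) A i j * B i j.
Proof.
rewrite /dot /mxtrace exchange_big /=; apply: eq_bigr => j _.
by rewrite mxE; apply: eq_bigr => i _; rewrite mxE.
Qed.

Lemma dotC m n (A B : 'M[R]_(m, n)) : dot A B = dot B A.
Proof. by rewrite !dot_sum; do 2!(apply: eq_bigr => ? _); rewrite mulrC. Qed.

Lemma dotDl m n (A B C : 'M[R]_(m, n)) : dot (A + B) C = dot A C + dot B C.
Proof. by rewrite /dot raddfD /= mulmxDl mxtraceD. Qed.

Lemma dotDr m n (A B C : 'M[R]_(m, n)) : dot C (A + B) = dot C A + dot C B.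
Proof. by rewrite dotC dotDl !(dotC C). Qed.

Lemma dotZl m n (a : R) (A B : 'M[R]_(m, n)) : dot (a *: A) B = a * dot A B.
Proof. by rewrite /dot linearZ /= -scalemxAl mxtraceZ. Qed.

Lemma dotZr m n (a : R) (A B : 'M[R]_(m, n)) : dot B (a *: A) = a * dot B A.
Proof. by rewrite dotC dotZl dotC. Qed.

Lemma dotNl m n (A B : 'M[R]_(m, n)) : dot (- A) B = - dot A B.
Proof. by rewrite -scaleN1r dotZl mulN1r. Qed.

Lemma dotNr m n (A B : 'M[R]_(m, n)) : dot B (- A) = - dot B A.
Proof. by rewrite dotC dotNl dotC. Qed.

Lemma dot0l m n (B : 'M[R]_(m, n)) : dot 0 B = 0.
Proof. by rewrite -(scale0r 0) dotZl mul0r. Qed.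

Lemma dot0r m n (B : 'M[R]_(m, n)) : dot B 0 = 0.
Proof. by rewrite dotC dot0l. Qed.

Lemma dot_ge0 m n (A : 'M[R]_(m, n)) : 0 <= dot A A.
Proof. by rewrite dot_sum; do 2!(apply: sumr_ge0 => ? _); rewrite -expr2 sqr_ge0. Qed.

Lemma dot_eq0 m n (A : 'M[R]_(m, n)) : (dot A A == 0) = (A == 0).
Proof.
apply/idP/eqP => [|->]; last by rewrite dot0l.
have sq_ge0 (x : R) : 0 <= x * x by rewrite -expr2 sqr_ge0.
rewrite dot_sum psumr_eq0 => [/allP A0|i _]; last exact: sumr_ge0.
apply/matrixP => i j; have /implyP/(_ isT) := A0 i (mem_index_enum _).
rewrite psumr_eq0 // => /allP/(_ j (mem_index_enum _))/implyP/(_ isT).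
by rewrite mulf_eq0 orbb mxE => /eqP.
Qed.

Lemma dot_gt0 m n (A : 'M[R]_(m, n)) : A != 0 -> 0 < dot A A.
Proof. by move=> A0; rewrite lt_def dot_eq0 A0 dot_ge0. Qed.

Lemma sqr_frob m n (A : 'M[R]_(m, n)) : frob A ^+ 2 = dot A A.
Proof.
rewrite /frob sqr_sqrtr; last by do 2!(apply: sumr_ge0 => ? _); rewrite sqr_ge0.
by rewrite dot_sum; do 2!(apply: eq_bigr => ? _); rewrite expr2.
Qed.

Lemma frobZ m n (t : R) (A : 'M[R]_(m, n)) : frob (t *: A) = `|t| * frob A.
Proof.
rewrite /frob -sqrtr_sqr -sqrtrM ?sqr_ge0 // mulr_sumr; congr Num.sqrt.
apply: eq_bigr => i _; rewrite mulr_sumr; apply: eq_bigr => j _.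
by rewrite mxE exprMn.
Qed.

Lemma dot_trmx m n (A B : 'M[R]_(m, n)) : dot A^T B^T = dot A B.
Proof. by rewrite /dot trmxK mxtrace_mulC -mxtrace_tr trmx_mul trmxK. Qed.

Lemma dot_gram m n (W : 'M[R]_(m, n)) (E : 'M[R]_m) :
  dot (W *m W^T) E = \tr (W^T *m E *m W).
Proof. by rewrite /dot trmx_mul trmxK [RHS]mxtrace_mulC mulmxA. Qed.

Lemma gram_eq0 m n (A : 'M[R]_(m, n)) : A *m A^T = 0 -> A = 0.
Proof.
move=> AAt0; apply/eqP; rewrite -dot_eq0 -dot_trmx.
by rewrite /dot trmxK AAt0 mxtrace0.
Qed.

End FrobeniusInnerProduct.

Section PositiveSemidefinite.
Variables (R : realType) (n : nat).
Implicit Types (S E : 'M[R]_n) (x y : 'cV[R]_n).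

Definition bform S x y : R := (x^T *m S *m y) 0 0.

Lemma bformC S x y : S^T = S -> bform S y x = bform S x y.
Proof.
move=> sym_S; rewrite /bform -[in RHS](trmxK (x^T *m S *m y)) [RHS]mxE.
by rewrite !trmx_mul !trmxK sym_S mulmxA.
Qed.

Lemma bform_line S x y (t : R) :
  bform S (x + t *: y) (x + t *: y) =
  bform S x x + t * (bform S x y + bform S y x) + t ^+ 2 * bform S y y.
Proof.
rewrite /bform; have -> : (x + t *: y)^T = x^T + t *: y^T by rewrite raddfD /= linearZ.
by rewrite !mulmxDr !mulmxDl -!scalemxAr -!scalemxAl !mxE; ring.
Qed.

Lemma bform_delta S i j : bform S (delta_mx i 0) (delta_mx j 0) = S i j.
Proof. by rewrite /bform trmx_delta -rowE -colE !mxE. Qed.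

Lemma dot_rank1 x S : dot (x *m x^T) S = bform S x x.
Proof. by rewrite dot_gram /bform /mxtrace big_ord1. Qed.

Lemma affine_ge0_slope0 (a b : R) : (forall t, 0 <= a + t * b) -> b = 0.
Proof.
move=> ge0; apply/eqP; apply/negPn/negP => b_neq0.
have := ge0 (- (a + 1) / b).
have -> : a + - (a + 1) / b * b = -1 by field.
lra.
Qed.

Lemma psd_diag_ge0 S i : psd S -> 0 <= S i i.
Proof. by case=> _ S_ge0; rewrite -bform_delta; apply: S_ge0. Qed.

(* Nonnegativity of [S] along the line [e_j + t e_i] forces the linear term to vanish. *)
Lemma psd_diag0 S i j : psd S -> S i i = 0 -> S i j = 0.
Proof.
case=> sym_S S_ge0 Sii0.
suff /eqP : 2 * S i j = 0 by rewrite mulf_eq0 pnatr_eq0 => /eqP.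
apply: (@affine_ge0_slope0 (S j j)) => t.
have := S_ge0 (delta_mx j 0 + t *: delta_mx i 0).
rewrite -/(bform _ _ _) bform_line bformC // !bform_delta Sii0 mulr0 addr0.
by rewrite mulr2n mulrDl mul1r.
Qed.

(* One step of symmetric Gaussian elimination (Cholesky) on the pivot [i]. *)
Definition schur_reduce S i : 'M[R]_n :=
  S - (S i i)^-1 *: (col i S *m (col i S)^T).

Lemma schur_reduce_entry S i j k :
  schur_reduce S i j k = S j k - (S i i)^-1 * (S j i * S k i).
Proof. by rewrite !mxE big_ord1 !mxE. Qed.

Lemma bform_schur_reduce S i x : S^T = S ->
  bform (schur_reduce S i) x x =
  bform S x x - (S i i)^-1 * bform S x (delta_mx i 0) ^+ 2.
Proof.
move=> sym_S; rewrite /bform /schur_reduce mulmxBr mulmxBl -scalemxAr -scalemxAl.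
rewrite [LHS]mxE [X in _ + X = _]mxE [X in _ - X = _]mxE !mulmxA.
congr (_ - _ * _); rewrite -(mulmxA (x^T *m col i S)) [LHS]mxE big_ord1.
by rewrite colE mulmxA expr2 trmx_mul sym_S; congr (_ * _); apply: bformC.
Qed.

Lemma psd_schur_reduce S i : psd S -> 0 < S i i -> psd (schur_reduce S i).
Proof.
move=> [sym_S S_ge0] Sii_gt0; split.
  by rewrite /schur_reduce raddfB /= linearZ /= trmx_mul trmxK sym_S.
move=> x; rewrite -/(bform _ _ _) bform_schur_reduce //.
set a := bform S x (delta_mx i 0); set c := - a / S i i.
have -> : bform S x x - (S i i)^-1 * a ^+ 2 =
          bform S x x + c * (a + a) + c ^+ 2 * S i i.
  by rewrite /c; field; exact: lt0r_neq0.
have := S_ge0 (x + c *: delta_mx i 0).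
by rewrite -/(bform _ _ _) bform_line (bformC x (delta_mx i 0)) // -/a bform_delta.
Qed.

Lemma schur_reduce_support S i : psd S -> 0 < S i i ->
  [set j | schur_reduce S i j j != 0] \proper [set j | S j j != 0].
Proof.
move=> S_psd Sii_gt0; apply/properP; split.
  apply/subsetP => j; rewrite !inE schur_reduce_entry; apply: contraNN => /eqP Sjj0.
  by rewrite Sjj0 (psd_diag0 i S_psd Sjj0) mul0r mulr0 subrr.
exists i; first by rewrite inE gt_eqF.
by rewrite inE negbK schur_reduce_entry mulrA mulVf ?mul1r ?subrr // gt_eqF.
Qed.

(* Peel off rank-one terms [(S i i)^-1 s s^T], [s] the [i]-th column of [S], each
   pairing nonnegatively with [E], until [S = 0]. *)
Lemma psd_dot_ge0 S E : psd S -> psd E -> 0 <= dot S E.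
Proof.
move=> + E_psd; have [k] := ubnP #|[set j | S j j != 0]|.
elim: k S => // k IH S supp_lt S_psd.
have [i Sii_neq0 | S_diag0] := pickP (fun j => S j j != 0); last first.
  suff -> : S = 0 by rewrite dot0l.
  apply/matrixP => j k'; rewrite mxE; apply: (psd_diag0 _ S_psd).
  by apply/eqP/negbFE/S_diag0.
have Sii_gt0 : 0 < S i i by rewrite lt_def Sii_neq0 psd_diag_ge0.
have -> : dot S E = dot (schur_reduce S i) E +
                    (S i i)^-1 * dot (col i S *m (col i S)^T) E.
  by rewrite /schur_reduce dotDl dotNl dotZl subrK.
apply: addr_ge0; last first.
  apply: mulr_ge0; first by rewrite invr_ge0 ltW.
  by rewrite dot_rank1; case: E_psd => _; apply.
apply: IH; last exact: psd_schur_reduce.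
by rewrite -ltnS (leq_trans _ supp_lt) // ltnS proper_card ?schur_reduce_support.
Qed.

Lemma psd_gram r (V : 'M[R]_(n, r)) : psd (V *m V^T).
Proof.
split=> [|x]; first by rewrite trmx_mul trmxK.
by have := dot_ge0 (V^T *m x); rewrite /dot /mxtrace big_ord1 trmx_mul trmxK !mulmxA.
Qed.

Lemma psd_nearest_of_certificate (P S0 : 'M[R]_n) :
  psd (P - S0) -> dot P (P - S0) = 0 ->
  forall S, psd S -> dot (P - S0) (P - S0) <= dot (S - S0) (S - S0).
Proof.
move=> E_psd P_orth S S_psd; set E := P - S0 in E_psd P_orth *.
have -> : S - S0 = (S - P) + E by rewrite /E addrA subrK.
clearbody E; have := dot_ge0 (S - P); have := psd_dot_ge0 S_psd E_psd.
rewrite !(dotDl, dotDr, dotNl, dotNr) (dotC E S) (dotC E P) (dotC P S) P_orth; lra.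
Qed.

End PositiveSemidefinite.

Lemma rank_gram_lt_kernel (R : realType) n r (V : 'M[R]_(n, r)) :
  (\rank (V *m V^T) < r)%N -> exists2 u : 'cV[R]_r, u != 0 & V *m u = 0.
Proof.
move=> rank_lt.
have ker_sub : (kermx (V *m V^T) <= kermx V)%MS.
  rewrite sub_kermx; apply/eqP/gram_eq0.
  by rewrite trmx_mul !mulmxA -(mulmxA (kermx _)) mulmx_ker mul0mx.
have rankV_lt : (\rank V^T < r)%N.
  have := mxrankS ker_sub; rewrite !mxrank_ker mxrank_tr.
  have := rank_leq_row V; have := rank_leq_row (V *m V^T); lia.
have /rowV0Pn [v /sub_kermxP vVt0 v_neq0] : kermx V^T != 0.
  by rewrite -mxrank_eq0 mxrank_ker subn_eq0 -ltnNge.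
exists v^T; first by rewrite -(inj_eq (@trmx_inj _ _ _)) trmxK linear0.
by rewrite -[V]trmxK -trmx_mul vVt0 linear0.
Qed.

Section Perturbation.
Variable R : realType.

Lemma cubic_ge0_near0 (a b c d delta : R) : 0 < delta ->
  (forall t, 0 < t -> t < delta -> 0 <= a + t * (b + t * (c + t * d))) -> 0 <= a.
Proof.
move=> delta_gt0 cubic_ge0; rewrite leNgt; apply/negP => a_lt0.
pose K : R := `|b| + `|c| + `|d| + 1.
have K_gt0 : 0 < K by rewrite /K ltr_wpDl ?addr_ge0.
have tail_le t : 0 < t -> t <= 1 -> b + t * (c + t * d) <= K.
  move=> t_gt0 t_le1; rewrite /K ltW // ltr_pwDr // -addrA.
  rewrite (le_trans (ler_norm _)) // (le_trans (ler_normD _ _)) // lerD2l.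
  rewrite normrM gtr0_norm // (le_trans (ler_piMl _ t_le1)) //.
  by rewrite (le_trans (ler_normD _ _)) // lerD2l normrM gtr0_norm // ler_piMl.
set t := Num.min (delta / 2) (Num.min 1 (- a / (2 * K))).
have t_gt0 : 0 < t.
  have ratio_gt0 : 0 < - a / (2 * K) by rewrite divr_gt0 ?mulr_gt0 ?oppr_gt0.
  by rewrite !lt_min ltr01 ratio_gt0 divr_gt0.
have t_le1 : t <= 1 by rewrite /t !ge_min lexx orTb orbT.
have t_lt : t < delta.
  by rewrite /t gt_min; apply/orP; left; lra.
have tK_le : t * K <= - a / 2.
  have : t <= - a / (2 * K) by rewrite /t !ge_min lexx !orbT.
  by rewrite ler_pdivlMr ?mulr_gt0 // mulrA [t * 2]mulrC -mulrA; lra.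
have := tail_le t t_gt0 t_le1; rewrite -(ler_pM2l t_gt0) => tail_bound.
have := cubic_ge0 t t_gt0 t_lt; lra.
Qed.

Lemma local_min_ray m n (g : 'M[R]_(m, n) -> R) X : local_min g X ->
  forall D, exists2 delta, 0 < delta &
    forall t, 0 < t -> t < delta -> g X <= g (X + t *: D).
Proof.
case=> eps [eps_gt0 X_min] D; have frobD_ge0 : 0 <= frob D by rewrite sqrtr_ge0.
exists (eps / (frob D + 1)) => [|t t_gt0]; first by rewrite divr_gt0 //; lra.
rewrite ltr_pdivlMr; last lra.
move=> t_lt; apply: X_min; rewrite addrAC subrr add0r frobZ gtr0_norm //.
by apply: le_lt_trans t_lt; rewrite ler_pM2l //; lra.
Qed.

End Perturbation.

Lemma fobj_ray (R : realType) n r (S0 : 'M[R]_n) (V W : 'M[R]_(n, r)) (t : R) :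
  let E := V *m V^T - S0 in let M := V *m W^T + W *m V^T in
  let N := W *m W^T in
  fobj S0 (V + t *: W) = fobj S0 V +
    t * (2 * dot E M + t * (dot M M + 2 * dot E N + t * (2 * dot M N + t * dot N N))).
Proof.
move=> E M N; rewrite /fobj !sqr_frob.
have -> : (V + t *: W) *m (V + t *: W)^T - S0 = E + t *: M + t ^+ 2 *: N.
  rewrite /E /M /N raddfD /= linearZ /= mulmxDl !mulmxDr -!scalemxAl -!scalemxAr.
  by rewrite scalerA -expr2 scalerDr !addrA !(addrAC _ _ (- S0)).
rewrite -/E; clearbody E M N.
rewrite !(dotDl, dotDr, dotZl, dotZr) (dotC M E) (dotC N E) (dotC N M); ring.
Qed.

Section LocalMinimizer.
Variables (R : realType) (n r : nat) (S0 : 'M[R]_n) (V : 'M[R]_(n, r)).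
Hypothesis V_min : local_min (fobj S0) V.
Let E := V *m V^T - S0.

Lemma fobj_ray_ge0 W : let M := V *m W^T + W *m V^T in let N := W *m W^T in
  exists2 delta, 0 < delta & forall t, 0 < t -> t < delta ->
    0 <= 2 * dot E M + t * (dot M M + 2 * dot E N + t * (2 * dot M N + t * dot N N)).
Proof.
move=> M N; have [delta delta_gt0 ray_ge] := local_min_ray V_min W.
exists delta => // t t_gt0 t_lt; have := ray_ge t t_gt0 t_lt.
by rewrite fobj_ray -lerBlDl subrr pmulr_rge0.
Qed.

Lemma fobj_first_order W : 0 <= dot E (V *m W^T + W *m V^T).
Proof.
have [delta delta_gt0 ray_ge] := fobj_ray_ge0 W.
by have := cubic_ge0_near0 delta_gt0 ray_ge; rewrite pmulr_rge0.
Qed.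

Lemma fobj_second_order W : V *m W^T + W *m V^T = 0 -> 0 <= dot E (W *m W^T).
Proof.
move=> M0; have [delta delta_gt0 ray_ge] := fobj_ray_ge0 W.
rewrite M0 in ray_ge.
suff : 0 <= 2 * dot E (W *m W^T) by rewrite pmulr_rge0.
apply: (cubic_ge0_near0 (b := 0) (c := dot (W *m W^T) (W *m W^T)) (d := 0) delta_gt0).
move=> t t_gt0 t_lt; rewrite mulr0 addr0 add0r -(pmulr_rge0 _ t_gt0).
by have := ray_ge t t_gt0 t_lt; rewrite !(dot0l, dot0r) !mulr0 !add0r.
Qed.

Hypothesis S0_sym : S0^T = S0.

Lemma residual_sym : E^T = E.
Proof. by rewrite /E raddfB /= trmx_mul trmxK S0_sym. Qed.

Lemma residual_mulmx_eq0 : E *m V = 0.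
Proof.
have dot_term : dot E ((E *m V) *m V^T) = dot (E *m V) (E *m V).
  by rewrite /dot trmx_mul residual_sym !mulmxA mxtrace_mulC !mulmxA.
have dot_term' : dot E (V *m (E *m V)^T) = dot (E *m V) (E *m V).
  by rewrite -dot_trmx residual_sym !trmx_mul !trmxK.
have := fobj_first_order (- (E *m V)).
rewrite raddfN /= mulmxN mulNmx -opprD dotNr dotDr dot_term dot_term' oppr_ge0.
move=> twice_le0; apply/eqP; rewrite -dot_eq0 eq_le dot_ge0 andbT; lra.
Qed.

Lemma residual_psd : (\rank (V *m V^T) < r)%N -> psd E.
Proof.
move=> rank_lt; split=> [|x]; first exact: residual_sym.
have [u u_neq0 Vu0] := rank_gram_lt_kernel rank_lt.
pose W := x *m u^T.
have M0 : V *m W^T + W *m V^T = 0.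
  by rewrite trmx_mul trmxK mulmxA Vu0 mul0mx add0r -mulmxA -trmx_mul Vu0 trmx0 mulmx0.
have WWt : W *m W^T = dot u u *: (x *m x^T).
  rewrite trmx_mul trmxK mulmxA -(mulmxA x) (mx11_scalar (u^T *m u)) mul_mx_scalar.
  by rewrite -scalemxAl /dot /mxtrace big_ord1.
by have := fobj_second_order M0; rewrite WWt dotZr dotC dot_rank1 pmulr_rge0 ?dot_gt0.
Qed.

End LocalMinimizer.

Theorem theorem1 (R : realType) (n r : nat) (hn : (2 <= n)%N)
  (hr1 : (1 <= r)%N) (hrn : (r < n)%N)
  (S0 : 'M[R]_n) (hS0 : S0^T = S0) (Vh : 'M[R]_(n, r))
  (hloc : local_min (fobj S0) Vh)
  (hrank : (\rank (Vh *m Vh^T) < r)%N) :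
  (forall V : 'M[R]_(n, r), fobj S0 Vh <= fobj S0 V) /\
  psd (Vh *m Vh^T) /\
  (forall S : 'M[R]_n, psd S ->
     frob (Vh *m Vh^T - S0) ^+ 2 <= frob (S - S0) ^+ 2) /\
  (forall S : 'M[R]_n, psd S -> (\rank S <= r)%N ->
     frob (Vh *m Vh^T - S0) ^+ 2 <= frob (S - S0) ^+ 2).
Proof.
have P_orth : dot (Vh *m Vh^T) (Vh *m Vh^T - S0) = 0.
  by rewrite dot_gram -mulmxA residual_mulmx_eq0 ?mulmx0 ?mxtrace0.
have psd_nearest S : psd S -> frob (Vh *m Vh^T - S0) ^+ 2 <= frob (S - S0) ^+ 2.
  rewrite !sqr_frob; apply: (psd_nearest_of_certificate _ P_orth).
  exact: residual_psd.
split=> [V|]; first exact: psd_nearest (psd_gram V).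
by split; [exact: psd_gram | split=> [|S /psd_nearest]].
Qed.
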